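(* Let $B$ be a blueprint and $\sim$ a congruence on $B$. Then the absorbing ideal $I_\sim=\{e\in B: eb\sim e\text{ for all }b\in B\}$ is an ideal of $B$. Moreover, $I_\sim$ is either empty or an equivalence class of $\sim$.
   Context: A monoid is a commutative semigroup $A$, written multiplicatively, with neutral element $1$. For a monoid $A$, $\mathbb N[A]$ denotes the semiring of finite formal sums $\sum a_i$ of elements $a_i\in A$ (repetitions allowed), with empty sum $\underline0$ and multiplication extended bilinearly from $A$. A pre-addition on $A$ is a relation $\mathcal R\subseteq\mathbb N[A]\times\mathbb N[A]$, written $\sum a_i\equiv\sum b_j$, which is an equivalence relation and satisfies: if $\sum a_i\equiv\sum b_j$ and $\sum c_k\equiv\sum d_l$, then $\sum a_i+\sum c_k\equiv\sum b_j+\sum d_l$ and $\sum_{i,k}a_ic_k\equiv\sum_{j,l}b_jd_l$. A blueprint $B=(A,\mathcal R)$ is a monoid $A$ with a pre-addition $\mathcal R$; we write $a\in B$ for $a\in A$. An element $e$ with $e\equiv\underline0$ is a zero of $B$. For an equivalence relation $\sim$ on $A$, its linear extension $\sim_{\mathbb N}$ is the equivalence relation on $\mathbb N[A]$ generated by $\sum_{i=1}^n a_i\sim_{\mathbb N}\sum_{i=1}^n b_i$ whenever $a_i\sim b_i$ for all $i$; and $\sim_{\mathcal R}$ is the smallest equivalence relation on $\mathbb N[A]$ containing both $\mathcal R$ and $\sim_{\mathbb N}$. A congruence on $B$ is an equivalence relation $\sim$ on $A$ such that (C1) $\sim_{\mathbb N}$ is a pre-addition on $A$, and (C2) the restriction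 of $\sim_{\mathcal R}$ to $A$ equals $\sim$. For a subset $I\subseteq B$, let $\sim^I$ be the equivalence relation on $A$ with $a\sim^I b$ iff $a=b$ or $a,b\in I$, and let $\sim_I$ be the relation on $A$ with $a\sim_I b$ iff there is a finite sequence $a\equiv\sum_k c_{1,k}\sim^I_{\mathbb N}\sum_k d_{1,k}\equiv\sum_k c_{2,k}\sim^I_{\mathbb N}\cdots\sim^I_{\mathbb N}\sum_k d_{n,k}\equiv b$ with $c_{i,k},d_{i,k}\in A$. An ideal of $B$ is a subset $I\subseteq B$ such that (I1) $ab\in I$ for all $a\in I$, $b\in B$; (I2) every zero of $B$ lies in $I$; (I3) if $a\sim_I b$ and $b\in I$, then $a\in I$. *)

(* Elements of N[A] (finite formal sums with repetition = finite multisets)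
   are represented by lists; a relation on N[A] is a relation on lists that
   is invariant under permutation (enforced in [preaddition]). *)
From Stdlib Require Import List Permutation Relations RelationClasses.
Import ListNotations.

Set Implicit Arguments.

Section Blue.
Variable A : Type.
Variable mul : A -> A -> A.
Variable one : A.

Definition is_cmonoid : Prop :=
  (forall a b c, mul a (mul b c) = mul (mul a b) c) /\
  (forall a b, mul a b = mul b a) /\
  (forall a, mul one a = a).

Definition lmul (s t : list A) : list A :=
  flat_map (fun a => map (mul a) t) s.

Definition preaddition (R : list A -> list A -> Prop) : Prop :=
  Equivalence R /\
  (forall s t, Permutation s t -> R s t) /\
  (forall s1 t1 s2 t2, R s1 t1 -> R s2 t2 -> R (s1 ++ s2) (t1 ++ t2)) /\
  (forall s1 t1 s2 t2, R s1 t1 -> R s2 t2 -> R (lmul s1 s2) (lmul t1 t2)).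

(* linear extension ~_N of a relation ~ on A: the equivalence relation on
   N[A] generated by sum a_i ~_N sum b_i when a_i ~ b_i (index-wise),
   sums being taken up to reordering *)
Definition linext (sim : A -> A -> Prop) : list A -> list A -> Prop :=
  clos_refl_sym_trans (list A)
    (fun s t => Forall2 sim s t \/ Permutation s t).

Definition simR (R : list A -> list A -> Prop) (sim : A -> A -> Prop)
  : list A -> list A -> Prop :=
  clos_refl_sym_trans (list A) (fun s t => R s t \/ linext sim s t).

Definition congruence (R : list A -> list A -> Prop) (sim : A -> A -> Prop)
  : Prop :=
  Equivalence sim /\
  preaddition (linext sim) /\
  (forall a b, simR R sim [a] [b] <-> sim a b).

Definition simUp (I : A -> Prop) (a b : A) : Prop := a = b \/ (I a /\ I b).

(* chains  s ≡ c1 ~^I_N d1 ≡ c2 ~^I_N ... ~^I_N dn ≡ t,  n >= 1 *)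
Inductive ichain (R : list A -> list A -> Prop) (I : A -> Prop)
  : list A -> list A -> Prop :=
| ichain_one : forall s c d t,
    R s c -> linext (simUp I) c d -> R d t -> ichain R I s t
| ichain_step : forall s c d t,
    R s c -> linext (simUp I) c d -> ichain R I d t -> ichain R I s t.

Definition simI (R : list A -> list A -> Prop) (I : A -> Prop) (a b : A)
  : Prop := ichain R I [a] [b].

Definition is_ideal (R : list A -> list A -> Prop) (I : A -> Prop) : Prop :=
  (forall a b, I a -> I (mul a b)) /\
  (forall e, R [e] [] -> I e) /\
  (forall a b, simI R I a b -> I b -> I a).

Definition absorbing (sim : A -> A -> Prop) (e : A) : Prop :=
  forall b, sim (mul e b) e.

End Blue.

From Stdlib Require Import List Permutation Relations RelationClasses.
From Stdlib Require Import Classical.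
Import ListNotations.

Set Implicit Arguments.

(* Compatibility of a congruence with multiplication makes the absorbing
   elements closed under multiplication and under ~, and commutativity
   (e ~ ef = fe ~ f) makes any two of them equivalent, so they form a
   single class when nonempty.  A zero e gives [eb] ≡ [] ≡ [e], hence
   eb ~ e.  Finally every ~^I-chain is in particular a chain for ~_R,
   because two absorbing elements are ~-equivalent; so a ~_I b with b
   absorbing gives a ~ b, and a is absorbing. *)

Lemma linext_mono (A : Type) (P Q : A -> A -> Prop) :
  (forall x y, P x y -> Q x y) ->
  forall s t, linext P s t -> linext Q s t.
Proof.
  intros HPQ s t Hst. induction Hst as [s t [HF | Hperm] | | |].
  - apply rst_step. left. exact (Forall2_impl _ HPQ HF).
  - apply rst_step. right. exact Hperm.
  - apply rst_refl.
  - apply rst_sym; assumption.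
  - eapply rst_trans; eassumption.
Qed.

Section Absorbing.

Variable A : Type.
Variable mul : A -> A -> A.
Variable R : list A -> list A -> Prop.
Variable sim : A -> A -> Prop.

Hypothesis sim_equiv : Equivalence sim.

Local Notation absorbing := (absorbing mul sim).

Lemma congruence_mulr (Hsim : congruence mul R sim) a b c :
  sim a b -> sim (mul a c) (mul b c).
Proof.
  intros Hab. destruct Hsim as [_ [[_ [_ [_ Hlmul]]] Hsingle]].
  apply Hsingle, rst_step. right.
  change (linext sim (lmul mul [a] [c]) (lmul mul [b] [c])).
  apply Hlmul.
  - apply rst_step. left. constructor; [exact Hab | constructor].
  - apply rst_refl.
Qed.

Lemma absorbing_mulr (mulA : forall a b c, mul a (mul b c) = mul (mul a b) c) e b :
  absorbing e -> absorbing (mul e b).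
Proof.
  intros He c. rewrite <- mulA. transitivity e; [apply He | symmetry; apply He].
Qed.

Lemma absorbing_sim (mulC : forall a b, mul a b = mul b a) e f :
  absorbing e -> absorbing f -> sim e f.
Proof.
  intros He Hf. transitivity (mul e f).
  - symmetry. apply He.
  - rewrite mulC. apply Hf.
Qed.

Lemma absorbing_simr (Hsim : congruence mul R sim) e x :
  absorbing e -> sim x e -> absorbing x.
Proof.
  intros He Hxe b.
  transitivity (mul e b); [exact (congruence_mulr Hsim b Hxe) |].
  transitivity e; [apply He | symmetry; exact Hxe].
Qed.

Lemma zero_absorbing (HR : preaddition mul R) (Hsim : congruence mul R sim) e :
  R [e] [] -> absorbing e.
Proof.
  intros He b. destruct HR as [R_equiv [_ [_ HRmul]]].
  destruct Hsim as [_ [_ Hsingle]].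
  assert (Heb : R [mul e b] []).
  { change (R (lmul mul [e] [b]) (lmul mul [] [b])).
    apply HRmul; [exact He | reflexivity]. }
  apply Hsingle, rst_step. left. rewrite Heb. symmetry. exact He.
Qed.

Lemma ichain_simR (I : A -> Prop) :
  (forall a b, I a -> I b -> sim a b) ->
  forall s t, ichain R I s t -> simR R sim s t.
Proof.
  intros HI.
  assert (Hlin : forall s t, linext (simUp I) s t -> linext sim s t).
  { apply linext_mono. intros x y [-> | [Hx Hy]]; [reflexivity | auto]. }
  assert (Hlink : forall s c d t, R s c -> linext (simUp I) c d ->
                  simR R sim d t -> simR R sim s t).
  { intros s c d t Hsc Hcd Hdt.
    apply rst_trans with c; [apply rst_step; left; exact Hsc |].
    apply rst_trans with d; [apply rst_step; right; apply Hlin; exact Hcd |].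
    exact Hdt. }
  induction 1 as [s c d t Hsc Hcd Hdt | s c d t Hsc Hcd _ IH];
    apply (Hlink s c d t Hsc Hcd).
  - apply rst_step. left. exact Hdt.
  - exact IH.
Qed.

End Absorbing.

Theorem mainTheorem10 (A : Type) (mul : A -> A -> A) (one : A)
  (HA : is_cmonoid mul one)
  (R : list A -> list A -> Prop) (HR : preaddition mul R)
  (sim : A -> A -> Prop) (Hsim : congruence mul R sim) :
  is_ideal mul R (absorbing mul sim) /\
  ((forall x, ~ absorbing mul sim x) \/
   (exists e, absorbing mul sim e /\
      forall x, absorbing mul sim x <-> sim x e)).
Proof.
  destruct HA as [mulA [mulC _]].
  pose proof (proj1 Hsim) as sim_equiv.
  pose proof (absorbing_sim sim_equiv mulC) as Hclass.
  pose proof (absorbing_simr sim_equiv Hsim) as Hclosed.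
  split; [split; [| split] |].
  - exact (absorbing_mulr sim_equiv mulA).
  - exact (zero_absorbing HR Hsim).
  - intros a b Hab Hb.
    apply (Hclosed b a Hb), (proj2 (proj2 Hsim)).
    exact (ichain_simR sim_equiv Hclass Hab).
  - destruct (classic (exists e, absorbing mul sim e)) as [[e He] | Hnone].
    + right. exists e. split; [exact He |].
      intros x. split; [intros Hx; exact (Hclass x e Hx He) | exact (Hclosed e x He)].
    + left. intros x Hx. apply Hnone. exists x. exact Hx.
Qed.
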